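(* Let $P$ be an $n\times n$ doubly stochastic matrix satisfying the pattern-symmetry condition $p_{ij}>0\Leftrightarrow p_{ji}>0$ for all $i\neq j$. If $P$ is SIA, then $P$ is a Sarymsakov matrix (i.e., $P\in\mathcal S_1$).
   Context: $\mathcal N=\{1,\ldots,n\}$. A matrix is stochastic if it is entrywise nonnegative with row sums $1$, and doubly stochastic if in addition its column sums are $1$. A stochastic $P$ is SIA if $\lim_{m\to\infty}P^m=\mathbf 1c^T$ for some nonnegative $c$ with entries summing to $1$. For stochastic $P$ and $\mathcal A\subseteq\mathcal N$, $F_P(\mathcal A)=\{j:\ p_{ij}>0\text{ for some } i\in\mathcal A\}$. A Sarymsakov matrix is a stochastic $P$ such that for any disjoint nonempty $\mathcal A,\tilde{\mathcal A}\subseteq\mathcal N$, either $F_P(\mathcal A)\cap F_P(\tilde{\mathcal A})\neq\emptyset$, or $F_P(\mathcal A)\cap F_P(\tilde{\mathcal A})=\emptyset$ and $|F_P(\mathcal A)\cup F_P(\tilde{\mathcal A})|>|\mathcal A\cup\tilde{\mathcal A}|$. *)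

(* real entries, indices are naturals 0..n-1 (paper's 1..n). *)
From Stdlib Require Import Reals List.
Import ListNotations.
Open Scope R_scope.

Fixpoint sumR (n : nat) (f : nat -> R) : R :=
  match n with O => 0 | S k => sumR k f + f k end.

Definition Mat := nat -> nat -> R.

Definition stochastic (n : nat) (P : Mat) : Prop :=
  (forall i j, (i < n)%nat -> (j < n)%nat -> 0 <= P i j) /\
  (forall i, (i < n)%nat -> sumR n (fun j => P i j) = 1).

Definition doubly_stochastic (n : nat) (P : Mat) : Prop :=
  stochastic n P /\
  (forall j, (j < n)%nat -> sumR n (fun i => P i j) = 1).

Definition matmul (n : nat) (A B : Mat) : Mat :=
  fun i j => sumR n (fun k => A i k * B k j).

Fixpoint matpow (n : nat) (P : Mat) (m : nat) : Mat :=
  match m with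
  | O => fun i j => if Nat.eqb i j then 1 else 0
  | S k => matmul n (matpow n P k) P
  end.

Definition SIA (n : nat) (P : Mat) : Prop :=
  stochastic n P /\
  exists c : nat -> R,
    (forall j, (j < n)%nat -> 0 <= c j) /\ sumR n c = 1 /\
    forall i j, (i < n)%nat -> (j < n)%nat ->
      Un_cv (fun m => matpow n P m i j) (c j).

(* subsets of N = {0..n-1} represented by duplicate-free lists *)
Definition subsetN (n : nat) (A : list nat) : Prop :=
  NoDup A /\ forall i, In i A -> (i < n)%nat.

Definition inF (n : nat) (P : Mat) (A : list nat) (j : nat) : Prop :=
  (j < n)%nat /\ exists i, In i A /\ 0 < P i j.

Definition Sarymsakov (n : nat) (P : Mat) : Prop :=
  stochastic n P /\
  forall A B : list nat,
    subsetN n A -> subsetN n B -> A <> [] -> B <> [] ->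
    (forall x, In x A -> ~ In x B) ->
    (exists j, inF n P A j /\ inF n P B j) \/
    ((~ exists j, inF n P A j /\ inF n P B j) /\
     (* |F(A) u F(B)| > |A u B| = |A| + |B| *)
     exists L : list nat, NoDup L /\
       (forall j, In j L -> inF n P A j \/ inF n P B j) /\
       (length L > length A + length B)%nat).

From Stdlib Require Import Reals List Lia Lra Classical ClassicalEpsilon.
Open Scope R_scope.

(* Since P is doubly stochastic, the columns indexed by F_P(X) carry the whole
   mass |X| of the rows in X, so |F_P(X)| >= |X|.  If the Sarymsakov expansion
   fails for disjoint A, B with F_P(A) and F_P(B) disjoint, both bounds are
   tight, and tightness means that no row outside X reaches F_P(X); with the
   pattern symmetry, X ∪ F_P(X) is then closed under the transitions of P.
   As an SIA doubly stochastic matrix has the positive limit 1 1^T / n, every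
   index is eventually reachable from every index at every large step.  Hence
   the closed set B ∪ F_P(B) is everything, which forces F_P(A) ⊆ B, and
   symmetrically F_P(B) ⊆ A.  Then the walk from a ∈ A alternates between A
   and B, so it cannot be back in A after an odd number of steps. *)

Lemma sumR_ext n f g : (forall i, (i < n)%nat -> f i = g i) -> sumR n f = sumR n g.
Proof.
  induction n; intros H; simpl; auto.
  rewrite IHn, H by (intros; try apply H; lia). reflexivity.
Qed.

Lemma sumR_plus n f g : sumR n (fun i => f i + g i) = sumR n f + sumR n g.
Proof. induction n; simpl; [lra|]. rewrite IHn; lra. Qed.

Lemma sumR_minus n f g : sumR n (fun i => f i - g i) = sumR n f - sumR n g.
Proof. induction n; simpl; [lra|]. rewrite IHn; lra. Qed.

Lemma sumR_scal n a f : sumR n (fun i => a * f i) = a * sumR n f.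
Proof. induction n; simpl; [lra|]. rewrite IHn; lra. Qed.

Lemma sumR_const n a : sumR n (fun _ => a) = INR n * a.
Proof. induction n; simpl sumR; [simpl; lra|]. rewrite IHn, S_INR; lra. Qed.

Lemma sumR_le n f g : (forall i, (i < n)%nat -> f i <= g i) -> sumR n f <= sumR n g.
Proof.
  induction n; intros H; simpl; [lra|].
  pose proof (H n ltac:(lia)). pose proof (IHn ltac:(intros; apply H; lia)). lra.
Qed.

Lemma sumR_zero n f : (forall i, (i < n)%nat -> f i = 0) -> sumR n f = 0.
Proof. intros H. rewrite (sumR_ext n f (fun _ => 0)), sumR_const by auto. lra. Qed.

Lemma sumR_nonneg n f : (forall i, (i < n)%nat -> 0 <= f i) -> 0 <= sumR n f.
Proof. intros H. rewrite <- (sumR_zero n (fun _ => 0)) by auto. apply sumR_le; auto. Qed.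

Lemma sumR_nonneg_eq0 n f : (forall i, (i < n)%nat -> 0 <= f i) -> sumR n f = 0 ->
  forall i, (i < n)%nat -> f i = 0.
Proof.
  induction n; intros H Hs i Hi; [lia|]. simpl in Hs.
  assert (0 <= sumR n f) by (apply sumR_nonneg; intros; apply H; lia).
  pose proof (H n ltac:(lia)).
  destruct (Nat.eq_dec i n) as [->|]; [lra|].
  apply IHn; [intros; apply H; lia | lra | lia].
Qed.

Lemma sumR_swap n m (f : nat -> nat -> R) :
  sumR n (fun i => sumR m (fun j => f i j)) = sumR m (fun j => sumR n (fun i => f i j)).
Proof.
  induction n; simpl; [symmetry; apply sumR_zero; auto|].
  rewrite IHn, <- sumR_plus. reflexivity.
Qed.

Lemma sumR_delta n x a : (x < n)%nat -> sumR n (fun i => if Nat.eqb i x then a else 0) = a.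
Proof.
  induction n; intros H; [lia|]. simpl. destruct (Nat.eq_dec x n) as [->|].
  - rewrite Nat.eqb_refl, sumR_zero; [lra|].
    intros i Hi. destruct (Nat.eqb_spec i n); [lia | auto].
  - rewrite IHn by lia. destruct (Nat.eqb_spec n x); [lia | lra].
Qed.

Lemma Un_cv_sumR n (u : nat -> nat -> R) l :
  (forall i, (i < n)%nat -> Un_cv (u i) (l i)) ->
  Un_cv (fun m => sumR n (fun i => u i m)) (sumR n l).
Proof.
  induction n; intros H; simpl.
  - intros e He. exists O. intros. unfold R_dist. rewrite Rminus_0_r, Rabs_R0. lra.
  - apply CV_plus; [apply IHn; intros |]; apply H; lia.
Qed.

Definition ind (p : nat -> Prop) (i : nat) : R :=
  if excluded_middle_informative (p i) then 1 else 0.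

Lemma ind_true (p : nat -> Prop) i : p i -> ind p i = 1.
Proof. unfold ind. destruct excluded_middle_informative; tauto. Qed.

Lemma ind_false (p : nat -> Prop) i : ~ p i -> ind p i = 0.
Proof. unfold ind. destruct excluded_middle_informative; tauto. Qed.

Lemma ind_bounds p i : 0 <= ind p i <= 1.
Proof. unfold ind. destruct excluded_middle_informative; lra. Qed.

Lemma ind_iff (p q : nat -> Prop) i : (p i <-> q i) -> ind p i = ind q i.
Proof.
  intros E. destruct (classic (p i)).
  - rewrite !ind_true by tauto. reflexivity.
  - rewrite !ind_false by tauto. reflexivity.
Qed.

Lemma ind_or_disjoint (p q : nat -> Prop) i :
  ~ (p i /\ q i) -> ind (fun x => p x \/ q x) i = ind p i + ind q i.
Proof.
  intros Hpq. destruct (classic (p i)), (classic (q i)); try tauto;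
    [rewrite ind_true, (ind_true p), (ind_false q) |
     rewrite ind_true, (ind_false p), (ind_true q) |
     rewrite ind_false, (ind_false p), (ind_false q)]; auto; try tauto; lra.
Qed.

Lemma sumR_ind_length n X : subsetN n X -> sumR n (ind (fun i => In i X)) = INR (length X).
Proof.
  intros [Hnd Hr]. induction X as [|x X IH]; simpl length.
  - apply sumR_zero. intros i _. apply ind_false. auto.
  - apply NoDup_cons_iff in Hnd as [Hx Hnd].
    rewrite (sumR_ext n _ (fun i => (if Nat.eqb i x then 1 else 0) + ind (fun i => In i X) i)).
    + rewrite sumR_plus, sumR_delta, IH, S_INR by (auto; intros; apply Hr; simpl; auto).
      lra.
    + intros i _. destruct (Nat.eqb_spec i x) as [->|Hix].
      * rewrite ind_true, (ind_false (fun i => In i X)) by (simpl; auto). lra.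
      * rewrite (ind_iff _ (fun i => In i X)) by (simpl; intuition congruence). lra.
Qed.

Lemma enum_below n (p : nat -> Prop) :
  exists L, subsetN n L /\ forall j, In j L <-> (j < n)%nat /\ p j.
Proof.
  set (b := fun j => if excluded_middle_informative (p j) then true else false).
  assert (Hmem : forall j, In j (filter b (seq 0 n)) <-> (j < n)%nat /\ p j).
  { intros j. rewrite filter_In, in_seq. unfold b.
    destruct excluded_middle_informative; intuition (auto with arith; congruence). }
  exists (filter b (seq 0 n)). split; [split|]; auto.
  - apply NoDup_filter, seq_NoDup.
  - intros i Hi. apply Hmem, Hi.
Qed.

Lemma matpow_col_sum n P m j : doubly_stochastic n P -> (j < n)%nat ->
  sumR n (fun i => matpow n P m i j) = 1.
Proof.
  intros [_ Hcol]. revert j. induction m; intros j Hj; simpl.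
  - apply sumR_delta; auto.
  - unfold matmul. rewrite sumR_swap, <- (Hcol j Hj).
    apply sumR_ext. intros k Hk.
    rewrite (sumR_ext n _ (fun i => P k j * matpow n P m i k)) by (intros; lra).
    rewrite sumR_scal, IHm by auto. lra.
Qed.

Lemma matpow_eq0_outside_invariant n P (Q : nat -> nat -> Prop) i :
  (forall k l, (k < n)%nat -> (l < n)%nat -> 0 <= P k l) ->
  (forall m k l, (k < n)%nat -> (l < n)%nat -> Q m k -> 0 < P k l -> Q (S m) l) ->
  Q O i -> forall m j, (j < n)%nat -> ~ Q m j -> matpow n P m i j = 0.
Proof.
  intros Hnn HQ HQi m. induction m; intros j Hj HQj; simpl.
  - destruct (Nat.eqb_spec i j) as [->|]; tauto.
  - unfold matmul. apply sumR_zero. intros k Hk.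
    destruct (classic (Q m k)) as [HQk|HQk]; [|rewrite IHm by auto; lra].
    destruct (Rle_lt_or_eq_dec _ _ (Hnn k j Hk Hj)) as [Hpos|<-]; [|lra].
    exfalso. eauto.
Qed.

Lemma SIA_doubly_stochastic_matpow_pos n P : doubly_stochastic n P -> SIA n P ->
  forall i j, (i < n)%nat -> (j < n)%nat ->
  exists N, forall m, (N <= m)%nat -> 0 < matpow n P m i j.
Proof.
  intros HD [_ [c [Hc0 [_ Hcv]]]] i j Hi Hj.
  assert (Hcol : sumR n (fun _ => c j) = 1).
  { apply (UL_sequence (fun m => sumR n (fun i => matpow n P m i j))).
    - apply (Un_cv_sumR n (fun i m => matpow n P m i j)). intros; apply Hcv; auto.
    - intros e He. exists O. intros m _.
      rewrite matpow_col_sum by auto. unfold R_dist. rewrite Rminus_diag_eq, Rabs_R0; auto. }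
  rewrite sumR_const in Hcol.
  assert (Hcj : 0 < c j).
  { destruct (Rle_lt_or_eq_dec _ _ (Hc0 j Hj)) as [|Hc]; [assumption | rewrite <- Hc in Hcol; lra]. }
  destruct (Hcv i j Hi Hj (c j) Hcj) as [N HN]. exists N. intros m Hm.
  specialize (HN m Hm). unfold R_dist in HN. apply Rabs_def2 in HN. lra.
Qed.

Section DoublyStochastic.

Variables (n : nat) (P : Mat).
Hypothesis P_doubly_stochastic : doubly_stochastic n P.

Lemma sumR_column_mass X : subsetN n X ->
  sumR n (fun j => sumR n (fun i => ind (fun i => In i X) i * P i j)) = INR (length X).
Proof.
  intros HX. rewrite sumR_swap, <- (sumR_ind_length n X HX).
  apply sumR_ext. intros i Hi.
  rewrite sumR_scal, (proj2 (proj1 P_doubly_stochastic)) by auto. lra.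
Qed.

Lemma column_mass_bounds X j : (j < n)%nat ->
  0 <= sumR n (fun i => ind (fun i => In i X) i * P i j) <= ind (inF n P X) j.
Proof.
  destruct P_doubly_stochastic as [[Hnn _] Hcol]. intros Hj. split.
  - apply sumR_nonneg. intros i Hi.
    pose proof (ind_bounds (fun i => In i X) i). pose proof (Hnn i j Hi Hj). nra.
  - destruct (classic (inF n P X j)) as [HF|HF].
    + rewrite ind_true, <- (Hcol j Hj) by auto. apply sumR_le. intros i Hi.
      pose proof (ind_bounds (fun i => In i X) i). pose proof (Hnn i j Hi Hj). nra.
    + rewrite ind_false by auto. right. apply sumR_zero. intros i Hi.
      destruct (classic (In i X)) as [HiX|HiX]; [|rewrite ind_false by auto; lra].
      destruct (Rle_lt_or_eq_dec _ _ (Hnn i j Hi Hj)) as [Hpos|<-]; [|lra].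
      exfalso. apply HF. split; eauto.
Qed.

Lemma length_le_image_size X : subsetN n X -> INR (length X) <= sumR n (ind (inF n P X)).
Proof.
  intros HX. rewrite <- (sumR_column_mass X HX).
  apply sumR_le. intros j Hj. apply column_mass_bounds, Hj.
Qed.

Lemma image_size_tight X : subsetN n X -> sumR n (ind (inF n P X)) <= INR (length X) ->
  forall i j, (i < n)%nat -> ~ In i X -> inF n P X j -> P i j = 0.
Proof.
  destruct P_doubly_stochastic as [[Hnn _] Hcol]. intros HX Hsize i j Hi HiX [Hj HF].
  set (mass := fun j => sumR n (fun i => ind (fun i => In i X) i * P i j)).
  assert (Hgap : forall j, (j < n)%nat -> ind (inF n P X) j - mass j = 0).
  { apply sumR_nonneg_eq0.
    - intros k Hk. pose proof (column_mass_bounds X k Hk). unfold mass. lra.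
    - pose proof (length_le_image_size X HX).
      rewrite sumR_minus. unfold mass. rewrite sumR_column_mass by auto. lra. }
  assert (Houtside : sumR n (fun k => (1 - ind (fun i => In i X) k) * P k j) = 0).
  { pose proof (Hgap j Hj) as E. rewrite ind_true in E by (split; auto).
    rewrite (sumR_ext n _ (fun k => P k j - ind (fun i => In i X) k * P k j)) by (intros; ring).
    rewrite sumR_minus, Hcol by auto. unfold mass in E. lra. }
  assert (Hterms : forall k, (k < n)%nat -> 0 <= (1 - ind (fun i => In i X) k) * P k j).
  { intros k Hk. pose proof (ind_bounds (fun i => In i X) k). pose proof (Hnn k j Hk Hj). nra. }
  pose proof (sumR_nonneg_eq0 n _ Hterms Houtside i Hi) as Hi0. cbv beta in Hi0.
  rewrite ind_false in Hi0 by auto. lra.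
Qed.

Hypothesis P_pattern_symmetric : forall i j, (i < n)%nat -> (j < n)%nat -> i <> j ->
  (0 < P i j <-> 0 < P j i).

Lemma tight_support_closed X :
  (forall i j, (i < n)%nat -> ~ In i X -> inF n P X j -> P i j = 0) ->
  forall k l, (k < n)%nat -> (l < n)%nat -> In k X \/ inF n P X k -> 0 < P k l ->
  In l X \/ inF n P X l.
Proof.
  intros Htight k l Hk Hl [HkX|HkF] Hkl; [right; split; eauto|].
  destruct (Nat.eq_dec k l) as [<-|Hkl']; [now right|].
  destruct (classic (In l X)) as [HlX|HlX]; [now left|].
  exfalso. apply (P_pattern_symmetric k l Hk Hl Hkl') in Hkl.
  rewrite (Htight l k Hl HlX HkF) in Hkl. lra.
Qed.

Hypothesis P_SIA : SIA n P.

Lemma invariant_eventually_holds (Q : nat -> nat -> Prop) i j :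
  (forall m k l, (k < n)%nat -> (l < n)%nat -> Q m k -> 0 < P k l -> Q (S m) l) ->
  (i < n)%nat -> (j < n)%nat -> Q O i -> exists N, forall m, (N <= m)%nat -> Q m j.
Proof.
  intros HQ Hi Hj HQi.
  destruct (SIA_doubly_stochastic_matpow_pos n P P_doubly_stochastic P_SIA i j Hi Hj)
    as [N HN].
  exists N. intros m Hm. apply NNPP. intros HQj.
  pose proof (HN m Hm) as Hpos.
  rewrite (matpow_eq0_outside_invariant n P Q i) in Hpos; auto; [lra|].
  apply P_doubly_stochastic.
Qed.

Lemma closed_set_contains_all (S : nat -> Prop) i j :
  (forall k l, (k < n)%nat -> (l < n)%nat -> S k -> 0 < P k l -> S l) ->
  (i < n)%nat -> (j < n)%nat -> S i -> S j.
Proof.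
  intros HS Hi Hj HSi.
  destruct (invariant_eventually_holds (fun _ => S) i j) as [N HN]; auto.
  exact (HN N (le_n N)).
Qed.

Lemma not_bipartite (A B : list nat) a :
  (forall x, In x A -> ~ In x B) -> In a A -> (a < n)%nat ->
  (forall k l, (k < n)%nat -> (l < n)%nat -> In k A -> 0 < P k l -> In l B) ->
  (forall k l, (k < n)%nat -> (l < n)%nat -> In k B -> 0 < P k l -> In l A) ->
  False.
Proof.
  intros Hdisj HaA Ha HAB HBA.
  destruct (invariant_eventually_holds
              (fun m x => if Nat.odd m then In x B else In x A) a a) as [N HN]; auto.
  - intros m k l Hk Hl HQ Hkl. rewrite Nat.odd_succ, <- Nat.negb_odd.
    destruct (Nat.odd m); simpl in *; eauto.
  - specialize (HN (2 * N + 1)%nat ltac:(lia)). rewrite Nat.odd_odd in HN.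
    exact (Hdisj a HaA HN).
Qed.

Lemma image_within_partner (A B : list nat) b :
  subsetN n B -> In b B -> sumR n (ind (inF n P B)) <= INR (length B) ->
  ~ (exists j, inF n P A j /\ inF n P B j) ->
  forall k l, (k < n)%nat -> (l < n)%nat -> In k A -> 0 < P k l -> In l B.
Proof.
  intros HB HbB Htight Hsep k l Hk Hl HkA Hkl.
  destruct (closed_set_contains_all (fun x => In x B \/ inF n P B x) b l)
    as [HlB|HlB]; auto.
  - apply tight_support_closed, image_size_tight; auto.
  - apply HB, HbB.
  - exfalso. apply Hsep. exists l. split; [split; eauto | exact HlB].
Qed.

End DoublyStochastic.

Theorem proposition4 (n : nat) (P : Mat) :
  doubly_stochastic n P ->
  (forall i j, (i < n)%nat -> (j < n)%nat -> i <> j ->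
     (0 < P i j <-> 0 < P j i)) ->
  SIA n P ->
  Sarymsakov n P.
Proof.
  intros HD Hsym HSIA. split; [exact (proj1 HD)|].
  intros A B HA HB HAne HBne Hdisj.
  destruct (classic (exists j, inF n P A j /\ inF n P B j)) as [Hmeet|Hsep];
    [now left | right; split; [exact Hsep|]].
  destruct (enum_below n (fun j => inF n P A j \/ inF n P B j)) as [L [HL HLmem]].
  exists L. split; [apply HL|]. split; [intros j Hj; apply HLmem, Hj|].
  assert (Hsize : INR (length L) = sumR n (ind (inF n P A)) + sumR n (ind (inF n P B))).
  { rewrite <- (sumR_ind_length n L HL), <- sumR_plus. apply sumR_ext. intros j Hj.
    rewrite (ind_iff _ (fun j => inF n P A j \/ inF n P B j)) by (rewrite HLmem; tauto).
    apply ind_or_disjoint. eauto. }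
  destruct (Nat.lt_ge_cases (length A + length B) (length L)) as [|Hle]; [assumption|].
  exfalso. apply le_INR in Hle. rewrite plus_INR in Hle.
  pose proof (length_le_image_size n P HD A HA).
  pose proof (length_le_image_size n P HD B HB).
  assert (HaA : exists a, In a A) by (destruct A; [congruence | eexists; left; reflexivity]).
  assert (HbB : exists b, In b B) by (destruct B; [congruence | eexists; left; reflexivity]).
  destruct HaA as [a HaA], HbB as [b HbB].
  apply (not_bipartite n P HD HSIA A B a Hdisj HaA (proj2 HA a HaA)).
  - apply (image_within_partner n P HD Hsym HSIA A B b HB HbB); [lra | exact Hsep].
  - apply (image_within_partner n P HD Hsym HSIA B A a HA HaA); [lra |].
    intros [j [HjB HjA]]. eauto.
Qed.
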